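(* In the setting described in the context, let $\lambda^*$ be a minimizer of the dual function $g(\lambda)$ over $\lambda\succeq 0$ (a global optimum of the dual problem). Then $\|\lambda^*\|_2$ is upper bounded by a quantity $\lambda_{\max}$ which is $O(N^2)$ as a function of the number of channels $N$.
   Context: Setting: a source communicates with $K$ users through a single relay over $N$ channels, with user weights $w_k\ge0$, $\sum_k w_k=1$; nonnegative channel power gains $a_m$, $b_{nk}$, $c_{mk}$ ($1\le m,n\le N$, $1\le k\le K$); power limits $P_s,P_r,P_t>0$. Logarithms are base 2. Relaxed problem (P'): maximize $\sum_{m,n,k}\frac{w_k}{2}\tilde\phi_{mnk}\min\{\log(1+a_mP^s_{mnk}/\tilde\phi_{mnk}),\log(1+c_{mk}P^s_{mnk}/\tilde\phi_{mnk}+b_{nk}P^r_{mnk}/\tilde\phi_{mnk})\}$ (terms with $\tilde\phi_{mnk}=0$ are $0$) over $\tilde\phi_{mnk}\in[0,1]$ with $\sum_{n,k}\tilde\phi_{mnk}=1\ \forall m$, $\sum_{m,k}\tilde\phi_{mnk}=1\ \forall n$, and $P^s_{mnk},P^r_{mnk}\ge0$ with $\sum P^s_{mnk}\le P_s$, $\sum P^r_{mnk}\le P_r$, $\sum(P^s_{mnk}+P^r_{mnk})\le P_t$. For $\lambda=(\lambda_s,\lambda_r,\lambda_t)\succeq0$ (multipliers of the three power constraints), the dual function is $g(\lambda)=\max[\text{objective of (P')}-(\lambda_s+\lambda_t)\sum P^s_{mnk}-(\lambda_r+\lambda_t)\sum P^r_{mnk}]+\lambda_sP_s+\lambda_rP_r+\lambda_tP_t$,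 maximizing over all feasible $\tilde\phi$ and nonnegative powers. It is assumed throughout that every power constraint that is active at optimality is strictly active (remains active under small perturbations of the power limits). *)

From HB Require Import structures.
From mathcomp Require Import all_boot all_order all_algebra.
From mathcomp Require Import all_classical all_reals all_analysis.
Set Implicit Arguments. Unset Strict Implicit. Unset Printing Implicit Defensive.
Import Order.TTheory GRing.Theory Num.Theory.
Local Open Scope ring_scope.
Local Open Scope classical_set_scope.

Section Relay.
Variables (R : realType) (N K : nat).

Definition log2 (x : R) : R := ln x / ln 2.

Definition var3 := 'I_N -> 'I_N -> 'I_K -> R.

Definition rate_term (w : 'I_K -> R) (a : 'I_N -> R) (b c : 'I_N -> 'I_K -> R)
  (phi ps pr : var3) (m n : 'I_N) (k : 'I_K) : R :=
  if phi m n k == 0 then 0 else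
  w k / 2 * phi m n k *
    Num.min (log2 (1 + a m * ps m n k / phi m n k))
            (log2 (1 + c m k * ps m n k / phi m n k + b n k * pr m n k / phi m n k)).

Definition objective w a b c (phi ps pr : var3) : R :=
  \sum_(m < N) \sum_(n < N) \sum_(k < K) rate_term w a b c phi ps pr m n k.

Definition total (p : var3) : R :=
  \sum_(m < N) \sum_(n < N) \sum_(k < K) p m n k.

(* feasible set of the inner maximization of the dual function:
   feasible phi, nonnegative powers (power constraints are dualized) *)
Definition dual_feasible (phi ps pr : var3) : Prop :=
  (forall m n k, 0 <= phi m n k <= 1) /\
  (forall m, \sum_(n < N) \sum_(k < K) phi m n k = 1) /\
  (forall n, \sum_(m < N) \sum_(k < K) phi m n k = 1) /\
  (forall m n k, 0 <= ps m n k /\ 0 <= pr m n k).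

Definition lagrangian w a b c (Ps Pr Pt ls lr lt : R) (phi ps pr : var3) : R :=
  objective w a b c phi ps pr - (ls + lt) * total ps - (lr + lt) * total pr
  + ls * Ps + lr * Pr + lt * Pt.

Definition dualfun w a b c (Ps Pr Pt ls lr lt : R) : \bar R :=
  ereal_sup [set x | exists phi ps pr, dual_feasible phi ps pr /\
                       x = (lagrangian w a b c Ps Pr Pt ls lr lt phi ps pr)%:E].

Definition dual_minimizer w a b c (Ps Pr Pt ls lr lt : R) : Prop :=
  [/\ 0 <= ls, 0 <= lr, 0 <= lt &
   forall ls' lr' lt', 0 <= ls' -> 0 <= lr' -> 0 <= lt' ->
     (dualfun w a b c Ps Pr Pt ls lr lt <= dualfun w a b c Ps Pr Pt ls' lr' lt')%E].

End Relay.

From Pilot Require Import Defs.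
From HB Require Import structures.
From mathcomp Require Import all_boot all_order all_algebra.
From mathcomp Require Import all_classical all_reals all_analysis.
From mathcomp Require Import ring lra.
Set Implicit Arguments. Unset Strict Implicit. Unset Printing Implicit Defensive.
Import Order.TTheory GRing.Theory Num.Theory.
Local Open Scope ring_scope.

(* At lambda = (0, 0, t), with t = G / (2 ln 2),
   every rate term is at most t * P^s_{mnk} (because phi log2(1 + x / phi)
   <= x / ln 2 and w_k a_m <= G), so the Lagrangian is at most t P_t and
   hence g(0, 0, t) <= t P_t.  At any lambda the zero-power allocation gives
   g(lambda) >= lambda_s P_s + lambda_r P_r + lambda_t P_t.  A minimizer
   lambda* therefore satisfies min(P_s, P_r, P_t) ||lambda*||_1 <= t P_t: the
   dual optimum is bounded independently of N, a fortiori by C N^2 (for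
   N = 0 the Lagrangian does not depend on the powers and lambda* = 0). *)

Lemma log2_1Dx_le (R : realType) (x : R) : 0 <= x -> log2 (1 + x) <= x / ln 2.
Proof.
move=> x0; have ln2_gt0 : 0 < ln (2 : R) by apply: ln_gt0; lra.
apply: ler_pM; rewrite ?invr_ge0 ?le_ln1Dx ?(ltW ln2_gt0) //; last by lra.
by apply: ln_ge0; lra.
Qed.

Lemma sqrt_sum_sqr3_le (R : realType) (x y z : R) :
  0 <= x -> 0 <= y -> 0 <= z -> Num.sqrt (x ^+ 2 + y ^+ 2 + z ^+ 2) <= x + y + z.
Proof.
move=> x0 y0 z0; rewrite -[leRHS]ger0_norm; last by lra.
rewrite -sqrtr_sqr ler_sqrt; [nra | exact: sqr_ge0].
Qed.

Lemma weight_le1 (R : realType) K (w : 'I_K -> R) k :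
  (forall k, 0 <= w k) -> \sum_(k < K) w k = 1 -> w k <= 1.
Proof. by move=> w0 <-; rewrite (bigD1 k) //= lerDl sumr_ge0. Qed.

Lemma weights_card_gt0 (R : realType) K (w : 'I_K -> R) :
  \sum_(k < K) w k = 1 -> (0 < K)%N.
Proof. by case: K w => [|//] w; rewrite big_ord0 => /eqP; rewrite eq_sym oner_eq0. Qed.

Section Relay.
Variables (R : realType) (N K : nat).
Variables (w : 'I_K -> R) (a : 'I_N -> R) (b c : 'I_N -> 'I_K -> R).
Implicit Types (phi ps pr : var3 R N K) (ls lr lt Ps Pr Pt : R).

Let zero_power : var3 R N K := fun _ _ _ => 0.

Lemma total_ge0 (p : var3 R N K) : (forall m n k, 0 <= p m n k) -> 0 <= Defs.total p.
Proof. by move=> p0; do 3 (apply: sumr_ge0 => ? _). Qed.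

Lemma total_zero_power : Defs.total zero_power = 0.
Proof. by rewrite /Defs.total big1 // => m _; rewrite big1 // => n _; rewrite big1. Qed.

Lemma objective_zero_power phi : objective w a b c phi zero_power zero_power = 0.
Proof.
rewrite /objective big1 // => m _; rewrite big1 // => n _; rewrite big1 // => k _.
rewrite /rate_term /zero_power; case: ifP => // _.
by rewrite !mulr0 !mul0r !addr0 /log2 ln1 mul0r minxx mulr0.
Qed.

Lemma lagrangian_zero_power Ps Pr Pt ls lr lt phi :
  lagrangian w a b c Ps Pr Pt ls lr lt phi zero_power zero_power
  = ls * Ps + lr * Pr + lt * Pt.
Proof. by rewrite /lagrangian objective_zero_power total_zero_power; ring. Qed.

Section Bounds.
Variable G : R.
Hypotheses (w_ge0 : forall k, 0 <= w k) (w_sum : \sum_(k < K) w k = 1).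
Hypothesis a_bound : forall m, 0 <= a m <= G.

Lemma rate_term_le phi ps pr m n k :
  0 <= phi m n k -> 0 <= ps m n k ->
  rate_term w a b c phi ps pr m n k <= G / (2 * ln 2) * ps m n k.
Proof.
move=> phi0 ps0; have /andP[a0 aG] := a_bound m.
have ln2_gt0 : 0 < ln (2 : R) by apply: ln_gt0; lra.
have G0 : 0 <= G := le_trans a0 aG.
rewrite /rate_term; case: ifPn => [_|phi_neq0].
  by rewrite mulr_ge0 ?divr_ge0 //; lra.
have phi_gt0 : 0 < phi m n k by rewrite lt_def phi_neq0.
set x := a m * ps m n k / phi m n k.
have x0 : 0 <= x by rewrite divr_ge0 ?mulr_ge0.
have coef0 : 0 <= w k / 2 * phi m n k by rewrite mulr_ge0 ?divr_ge0.
have wa : w k * a m <= G.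
  by have := ler_pM (w_ge0 k) a0 (weight_le1 k w_ge0 w_sum) aG; rewrite mul1r.
apply: le_trans (_ : w k / 2 * phi m n k * (x / ln 2) <= _).
  by rewrite ler_wpM2l // (le_trans _ (log2_1Dx_le x0)) // ge_min lexx.
have -> : w k / 2 * phi m n k * (x / ln 2) = w k * a m / (2 * ln 2) * ps m n k.
  by rewrite /x; field; rewrite !gt_eqF.
by rewrite ler_wpM2r // ler_wpM2r // invr_ge0 mulr_ge0 //; lra.
Qed.

Lemma objective_le_total phi ps pr :
  dual_feasible phi ps pr ->
  objective w a b c phi ps pr <= G / (2 * ln 2) * Defs.total ps.
Proof.
case=> phi01 [_ [_ p0]].
rewrite /objective /Defs.total !mulr_sumr; apply: ler_sum => m _.
rewrite !mulr_sumr; apply: ler_sum => n _.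
rewrite !mulr_sumr; apply: ler_sum => k _.
by apply: rate_term_le; [case/andP: (phi01 m n k) | case: (p0 m n k)].
Qed.

End Bounds.

Lemma dual_feasible_zero_power : (0 < K)%N -> exists phi, dual_feasible phi zero_power zero_power.
Proof.
move=> K_gt0; pose k0 : 'I_K := Ordinal K_gt0.
pose phi : var3 R N K := fun m n k => ((n == m) && (k == k0))%:R.
have row_sum m n : \sum_(k < K) phi m n k = (n == m)%:R.
  rewrite (bigD1 k0) //= big1 => [|k /negbTE kk]; last by rewrite /phi kk andbF.
  by rewrite /phi eqxx andbT addr0.
exists phi; split; [|split; [|split]] => //.
- by move=> m n k; rewrite ler0n lern1 leq_b1.
- move=> m; under eq_bigr do rewrite row_sum.
  by rewrite (bigD1 m) //= eqxx big1 ?addr0 // => n /negbTE ->.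
- move=> n; under eq_bigr do rewrite row_sum.
  by rewrite (bigD1 n) //= eqxx big1 ?addr0 // => m; rewrite eq_sym => /negbTE ->.
Qed.

Lemma dualfun_ge_zero_power Ps Pr Pt ls lr lt : (0 < K)%N ->
  ((ls * Ps + lr * Pr + lt * Pt)%:E <= dualfun w a b c Ps Pr Pt ls lr lt)%E.
Proof.
move=> /dual_feasible_zero_power[phi feas]; apply: ereal_sup_ubound.
by exists phi, zero_power, zero_power; rewrite lagrangian_zero_power.
Qed.

Lemma dualfun_le_of_objective_le Ps Pr Pt t : 0 <= t ->
  (forall phi ps pr, dual_feasible phi ps pr ->
     objective w a b c phi ps pr <= t * Defs.total ps) ->
  (dualfun w a b c Ps Pr Pt 0 0 t <= (t * Pt)%:E)%E.
Proof.
move=> t0 obj_le; apply: ge_ereal_sup => _ [phi [ps [pr [feas ->]]]].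
have [_ [_ [_ p0]]] := feas.
have : 0 <= t * Defs.total pr by rewrite mulr_ge0 ?total_ge0 // => m n k; case: (p0 m n k).
rewrite lee_fin /lagrangian; have := obj_le _ _ _ feas; lra.
Qed.

Lemma dual_minimizer_le Ps Pr Pt ls lr lt t : (0 < K)%N -> 0 <= t ->
  (forall phi ps pr, dual_feasible phi ps pr ->
     objective w a b c phi ps pr <= t * Defs.total ps) ->
  dual_minimizer w a b c Ps Pr Pt ls lr lt ->
  ls * Ps + lr * Pr + lt * Pt <= t * Pt.
Proof.
move=> K_gt0 t0 obj_le [_ _ _ minimal]; rewrite -lee_fin.
apply: le_trans (dualfun_ge_zero_power Ps Pr Pt ls lr lt K_gt0) _.
apply: le_trans (minimal 0 0 t (lexx _) (lexx _) t0) _.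
exact: dualfun_le_of_objective_le.
Qed.

End Relay.

Theorem lemma3 (R : realType) (K : nat) (Ps Pr Pt G : R) :
  0 < Ps -> 0 < Pr -> 0 < Pt -> 0 <= G ->
  exists C : R, forall (N : nat) (w : 'I_K -> R) (a : 'I_N -> R)
    (b c : 'I_N -> 'I_K -> R) (ls lr lt : R),
    (forall k, 0 <= w k) -> \sum_(k < K) w k = 1 ->
    (forall m, 0 <= a m <= G) ->
    (forall n k, 0 <= b n k <= G) ->
    (forall m k, 0 <= c m k <= G) ->
    dual_minimizer w a b c Ps Pr Pt ls lr lt ->
    Num.sqrt (ls ^+ 2 + lr ^+ 2 + lt ^+ 2) <= C * (N%:R) ^+ 2.
Proof.
move=> Ps0 Pr0 Pt0 G0.
set t := G / (2 * ln 2); set p := Num.min Ps (Num.min Pr Pt).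
have t0 : 0 <= t by rewrite divr_ge0 // mulr_ge0 // ln_ge0 //; lra.
have p0 : 0 < p by rewrite !lt_min Ps0 Pr0 Pt0.
have [pPs pPr pPt] : [/\ p <= Ps, p <= Pr & p <= Pt] by rewrite !ge_min !lexx !orbT.
exists (t * Pt / p) => N w a b c ls lr lt w0 w1 ha _ _ lmin.
have [ls0 lr0 lt0 _] := lmin; have K_gt0 := weights_card_gt0 w1.
apply: le_trans (sqrt_sum_sqr3_le ls0 lr0 lt0) _.
have sum_le : (ls + lr + lt) * p <= ls * Ps + lr * Pr + lt * Pt.
  by rewrite !mulrDl !lerD // ler_wpM2l.
rewrite mulrAC ler_pdivlMr // (le_trans sum_le) //.
case: N => [|N] in a b c ha lmin *.
  rewrite expr0n /= mulr0 -(mul0r Pt).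
  apply: dual_minimizer_le K_gt0 (lexx 0) _ lmin => phi ps pr _.
  by rewrite /objective /Defs.total !big_ord0 mul0r.
apply: le_trans (dual_minimizer_le K_gt0 t0 (objective_le_total b c w0 w1 ha) lmin) _.
by rewrite ler_peMr ?(mulr_ge0 t0 (ltW Pt0)) // exprn_ege1 // ler1n.
Qed.
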